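(* Let $e,e'$ be distinct edges in a hypergraph $H=(V,E)$ and let $k$ be a positive integer. (1) If $\gamma_H(e)\ge k$ and $e'$ is a $k$-weak edge, then $\gamma_H(e)=\gamma_{H'}(e)$ where $H'=H\setminus e'$. (2) Suppose $\gamma_H(e)<k$ and $e'$ is a $k$-strong edge. Let $H'=H/e'$ be obtained by contracting $e'$. If $f$ is the edge of $H'$ corresponding to $e$, then $\gamma_H(e)=\gamma_{H'}(f)$.
   Context: A hypergraph $H=(V,E)$ has edges that are subsets of $V$. For $U\subseteq V$, $H[U]=(U,\{e\in E:e\subseteq U\})$. For $A\subseteq V$, $\delta_H(A)$ is the set of edges meeting both $A$ and $V\setminus A$; $\lambda(H)=\min_{\emptyset\subsetneq A\subsetneq V}|\delta_H(A)|$. The strength of $e$ is $\gamma_H(e)=\max_{e\subseteq U\subseteq V}\lambda(H[U])$. An edge $e$ is $k$-strong if $\gamma_H(e)\ge k$ and $k$-weak otherwise. $H\setminus e'$ denotes deletion of $e'$. Contracting $e'$ yields $H/e'$: all vertices of $e'$ are identified into one new vertex $v_{e'}$; edges contained in $e'$ are removed; every other edge $g$ meeting $e'$ has $g\cap e'$ replaced by $v_{e'}$. *)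

From mathcomp Require Import all_boot.
Set Implicit Arguments. Unset Strict Implicit. Unset Printing Implicit Defensive.

(* Edges are identified by labels, so that after a
   contraction "the edge corresponding to e" is simply the same label e. *)
Record hypergraph (V I : finType) := Hypergraph {
  hverts : {set V};
  hedges : {set I};
  hinc : I -> {set V} }.

Section Hyp.
Variables (V I : finType).
Implicit Types (H : hypergraph V I) (A U : {set V}) (i : I).

Definition wf_hypergraph H := forall i, i \in hedges H -> hinc H i \subset hverts H.

Definition delta H A : {set I} :=
  [set i in hedges H | (hinc H i :&: A != set0)
                       && (hinc H i :&: (hverts H :\: A) != set0)].

Definition cuts H : {set {set V}} :=
  [set A : {set V} | (set0 \proper A) && (A \proper hverts H)].

(* lambda(H) = min over cuts of |delta_H(A)|; the default #|hedges H| is an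
   upper bound of every |delta_H(A)|, so this is the true minimum whenever a
   cut exists.  Convention: lambda = 0 when there is no cut (<= 1 vertex). *)
Definition lambda H : nat :=
  if cuts H == set0 then 0
  else \big[minn/#|hedges H|]_(A in cuts H) #|delta H A|.

Definition induced H U : hypergraph V I :=
  Hypergraph U [set i in hedges H | hinc H i \subset U] (hinc H).

Definition strength H i : nat :=
  \max_(U : {set V} | (hinc H i \subset U) && (U \subset hverts H))
     lambda (induced H U).

Definition delete H i' : hypergraph V I :=
  Hypergraph (hverts H) (hedges H :\ i') (hinc H).

(* contraction H / e': the vertices of e' are identified into the new vertex
   None; the other vertices v become Some v; edges contained in e' are
   removed; any other edge g meeting e' has g :&: e' replaced by None. *)
Definition contract H i' : hypergraph (option V) I :=
  let c := hinc H i' in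
  Hypergraph (None |: (Some @: (hverts H :\: c)))
             [set i in hedges H | ~~ (hinc H i \subset c)]
             (fun i => if [disjoint hinc H i & c] then Some @: hinc H i
                       else None |: (Some @: (hinc H i :\: c))).

End Hyp.

From HB Require Import structures.
From mathcomp Require Import all_boot.
Set Implicit Arguments. Unset Strict Implicit. Unset Printing Implicit Defensive.

(* Deleting e' only lowers connectivities, and a vertex set U realising the
   strength of e cannot contain the k-weak edge e', so H[U] survives intact.

   For the contraction, write p for the vertex map of H / e'.  A cut B of
   (H / e')[Us] is crossed by exactly the edges crossing its pull-back p^-1 B
   in H[p^-1 Us], which gives gamma_H(e) <= gamma_{H/e'}(e) whenever e is not
   inside e'; the latter holds since e' is k-strong and e is not.
   Conversely, let Us realise the strength m of e in H / e'.  If Us does not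
   contain the contracted vertex, H[p^-1 Us] is a copy of (H / e')[Us].
   Otherwise glue p^-1 Us with a k-connected W containing e': a cut of the
   union either splits W, and then has at least k edges, or does not separate
   e' and is a pull-back, with at least m edges.  Hence gamma_H(e) >= min m k,
   and gamma_H(e) < k forces gamma_H(e) >= m. *)

(* [lambda] is a [\big[minn/_]] whose default is not neutral for [minn]; this
   instance makes the commutative-semigroup bigop lemmas such as [bigD1] apply. *)
HB.instance Definition _ := SemiGroup.isComLaw.Build nat minn minnA minnC.

Lemma disjoint_imset_pre (aT rT : finType) (f : aT -> rT) (A : {set aT}) (B : {set rT}) :
  [disjoint f @: A & B] = [disjoint A & f @^-1: B].
Proof.
rewrite -!setI_eq0 -[LHS]negbK -[RHS]negbK; congr (~~ _); apply/set0Pn/set0Pn.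
  by case=> _ /setIP [/imsetP [x xA ->] fxB]; exists x; rewrite !inE xA.
by case=> x /setIP [xA]; rewrite inE => fxB; exists (f x); rewrite inE imset_f.
Qed.

Section Connectivity.
Variables (V I : finType).
Implicit Types (H : hypergraph V I) (A U W X : {set V}) (i : I).

Lemma in_cuts H A :
  (A \in cuts H) = [&& A != set0, A \subset hverts H & ~~ (hverts H \subset A)].
Proof. by rewrite inE proper0 properE. Qed.

Lemma cuts_eq0 H : (cuts H == set0) = (#|hverts H| <= 1).
Proof.
apply/idP/idP; last first.
  move=> le1; apply/eqP/setP => A; rewrite in_set0 inE proper0.
  apply/negbTE/andP => -[A0 /proper_card ltA].
  by have := leq_trans ltA le1; rewrite ltnS leqn0 cards_eq0 (negbTE A0).
apply: contraLR; rewrite -ltnNge => /card_gt1P [x [y [xV yV xy]]].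
apply/set0Pn; exists [set x]; rewrite in_cuts -cards_eq0 cards1 sub1set xV /=.
by apply/subsetPn; exists y; rewrite // in_set1 eq_sym.
Qed.

Lemma lambda_le_delta H A : A \in cuts H -> lambda H <= #|delta H A|.
Proof.
by move=> cutA; rewrite /lambda; case: eqP => // _; rewrite (bigD1 A) //= geq_minl.
Qed.

Lemma lambda_ge H m : 1 < #|hverts H| ->
  (forall A, A \in cuts H -> m <= #|delta H A|) -> m <= lambda H.
Proof.
rewrite ltnNge -cuts_eq0 => cutsH ge_m; rewrite /lambda (negbTE cutsH).
have [A cutA] := set0Pn _ cutsH.
apply: (big_ind (fun x => m <= x)) => [|x y mx my|B /ge_m //].
  apply: leq_trans (ge_m A cutA) (subset_leq_card _).
  by apply/subsetP => i; rewrite inE => /andP [].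
by rewrite leq_min mx my.
Qed.

Lemma lambda_gt0 H : 0 < lambda H -> 1 < #|hverts H|.
Proof. by rewrite [1 < _]ltnNge -cuts_eq0 /lambda; case: eqP. Qed.

Lemma lambda_eq0_isolated H x : x \in hverts H ->
  (forall i, i \in hedges H -> x \notin hinc H i) -> lambda H = 0.
Proof.
move=> xV isolated; have [le1|gt1] := leqP #|hverts H| 1.
  by rewrite /lambda cuts_eq0 le1.
have delta_x : delta H [set x] = set0.
  apply/eqP; rewrite -subset0; apply/subsetP => i.
  rewrite inE => /and3P [/isolated xi /set0Pn [y /setIP [yi /set1P yx]] _].
  by rewrite -yx yi in xi.
apply/eqP; rewrite -leqn0 -(cards0 I) -delta_x; apply: lambda_le_delta.
rewrite in_cuts -cards_eq0 cards1 sub1set xV /=.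
by apply: contraTN gt1 => /subset_leq_card; rewrite cards1 -leqNgt.
Qed.

Lemma delta_induced_setIl H U A :
  delta (induced H U) (A :&: U) = delta (induced H U) A.
Proof.
apply/setP => i; rewrite !inE /=; case iU: (hinc H i \subset U); rewrite ?andbF //=.
by rewrite (setIC A) setIA (setIidPl iU) setDIr setDv set0U.
Qed.

Lemma delta_induced_subset H U X A : U \subset X ->
  delta (induced H U) A \subset delta (induced H X) A.
Proof.
move=> sUX; apply/subsetP => i; rewrite !inE /= -!andbA.
case/and4P=> -> iU -> iUA; rewrite (subset_trans iU sUX) /=.
by apply: contra iUA; rewrite -!subset0 => /(subset_trans _); apply; apply/setIS/setSD.
Qed.

Lemma lambda_induced_le_delta H W X A : W \subset X ->
  A :&: W != set0 -> ~~ (W \subset A) ->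
  lambda (induced H W) <= #|delta (induced H X) A|.
Proof.
move=> sWX AW0 nWA.
have cutAW : A :&: W \in cuts (induced H W).
  by rewrite in_cuts AW0 subsetIr /= subsetI subxx andbT.
apply: leq_trans (lambda_le_delta cutAW) (subset_leq_card _).
by rewrite delta_induced_setIl; apply: delta_induced_subset.
Qed.

Lemma lambda_induced_setU H U W m : U :&: W != set0 ->
  m <= lambda (induced H W) ->
  (forall A, A \in cuts (induced H U) ->
     (W :&: U \subset A) || [disjoint W & A] -> m <= #|delta (induced H U) A|) ->
  m <= lambda (induced H (U :|: W)).
Proof.
move=> UW0 mW mU; have [-> //|m0] := posnP m.
apply: lambda_ge => [|A].
  apply: leq_trans (lambda_gt0 (leq_trans m0 mW)) _.
  exact/subset_leq_card/subsetUr.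
rewrite in_cuts => /and3P [A0 sAX nXA].
have [/andP [AW0 nWA] | unsplitW] := boolP ((A :&: W != set0) && ~~ (W \subset A)).
  exact: leq_trans mW (lambda_induced_le_delta _ (subsetUr U W) AW0 nWA).
rewrite negb_and !negbK setI_eq0 disjoint_sym orbC in unsplitW.
have cutAU : A :&: U \in cuts (induced H U).
  rewrite in_cuts subsetIr /= subsetI subxx andbT.
  case/orP: (unsplitW) => [sWA | dWA]; apply/andP; split.
  - by apply: contraNneq UW0; rewrite -subset0 setIC => <-; apply: setIS.
  - by apply: contra nXA => sUA; rewrite subUset sUA.
  - apply: contraNneq A0 => AU0; apply/eqP.
    by rewrite -(setIidPl sAX) setIUr AU0 set0U setIC; apply/eqP; rewrite setI_eq0.
  - case/set0Pn: UW0 => x /setIP [xU xW]; apply/subsetPn; exists x => //.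
    by rewrite (disjointFr dWA xW).
have unsplitWU : (W :&: U \subset A :&: U) || [disjoint W & A :&: U].
  case/orP: unsplitW => [sWA | dWA]; first by rewrite setSI.
  by rewrite (disjointWr (subsetIl A U) dWA) orbT.
apply: leq_trans (mU _ cutAU unsplitWU) (subset_leq_card _).
by rewrite delta_induced_setIl; apply/delta_induced_subset/subsetUl.
Qed.

End Connectivity.

Section Strength.
Variables (V I : finType).
Implicit Types (H : hypergraph V I) (U : {set V}) (i j : I).

Lemma lambda_le_strength H i U : hinc H i \subset U -> U \subset hverts H ->
  lambda (induced H U) <= strength H i.
Proof.
move=> iU UV.
by apply: (leq_bigmax_cond (F := fun U => lambda (induced H U))); rewrite iU UV.
Qed.

Lemma strength_le H i m :
  (forall U, hinc H i \subset U -> U \subset hverts H -> lambda (induced H U) <= m) ->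
  strength H i <= m.
Proof. by move=> le_m; apply/bigmax_leqP => U /andP []; apply: le_m. Qed.

Lemma strength_attained H i : hinc H i \subset hverts H ->
  exists2 U : {set V}, (hinc H i \subset U) && (U \subset hverts H) &
             strength H i = lambda (induced H U).
Proof.
move=> iV; set P := [pred U : {set V} | (hinc H i \subset U) && (U \subset hverts H)].
have [|U PU maxU] := eq_bigmax_cond (fun U => lambda (induced H U)) (A := P).
  by apply/card_gt0P; exists (hverts H); rewrite inE /= iV subxx.
by exists U.
Qed.

Lemma strength_subset H i j : hinc H i \subset hinc H j -> strength H j <= strength H i.
Proof.
move=> sij; apply: strength_le => U jU UV.
exact: lambda_le_strength (subset_trans sij jU) UV.
Qed.

End Strength.

Section Deletion.
Variables (V I : finType).
Implicit Types (H : hypergraph V I) (U : {set V}) (i : I).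

Lemma delete_notin H i : i \notin hedges H -> delete H i = H.
Proof.
case: H => Vs Es inc /= iE; congr Hypergraph; apply/setP => j.
by rewrite !inE; case: eqP => // ->; rewrite (negbTE iE).
Qed.


Lemma induced_delete H U i : induced (delete H i) U = delete (induced H U) i.
Proof. by congr Hypergraph; apply/setP => j; rewrite !inE andbA. Qed.


Lemma lambda_delete H i : lambda (delete H i) <= lambda H.
Proof.
have [le1|gt1] := leqP #|hverts H| 1; first by rewrite /lambda cuts_eq0 le1.
apply: lambda_ge => // A cutA.
apply: leq_trans (lambda_le_delta (H := delete H i) cutA) _.
by apply/subset_leq_card/subsetP => j; rewrite !inE -andbA => /andP [_].
Qed.


Lemma strength_delete_weak H e e' k : wf_hypergraph H -> e \in hedges H ->
  k <= strength H e -> strength H e' < k -> strength (delete H e') e = strength H e.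
Proof.
move=> wfH eE ke e'k; apply/eqP; rewrite eqn_leq; apply/andP; split.
  apply: strength_le => U eU UV; rewrite induced_delete.
  exact: leq_trans (lambda_delete _ _) (lambda_le_strength (H := H) eU UV).
have [U /andP [eU UV] strU] := strength_attained (wfH e eE).
have e'U : ~~ (hinc H e' \subset U).
  apply: contraTN e'k => e'U; rewrite -leqNgt (leq_trans ke) // strU.
  exact: lambda_le_strength.
rewrite strU -[induced H U](delete_notin (i := e')); last first.
  by rewrite inE negb_and e'U orbT.
by rewrite -induced_delete; apply: lambda_le_strength.
Qed.


End Deletion.

Section Contraction.
Variables (V I : finType) (H : hypergraph V I) (e' : I).
Implicit Types (A U W : {set V}) (B Us : {set option V}) (v : V) (i : I).

Local Notation c := (hinc H e').
Local Notation Hc := (contract H e').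

Definition contract_vertex v : option V := if v \in c then None else Some v.
Local Notation p := contract_vertex.

Lemma contract_vertex_in v : v \in c -> p v = None.
Proof. by rewrite /p => ->. Qed.

Lemma contract_vertex_notin v : v \notin c -> p v = Some v.
Proof. by rewrite /p => /negbTE ->. Qed.

Lemma contract_vertex_Some u v : p u = Some v -> u = v.
Proof. by rewrite /p; case: ifP => // _ []. Qed.

Lemma mem_imset_contract_Some A v : (Some v \in p @: A) = (v \in A) && (v \notin c).
Proof.
apply/imsetP/andP => [[u uA /esym /[dup] /contract_vertex_Some <-]|[vA vc]].
  by rewrite /p; case: ifP.
by exists v; rewrite ?contract_vertex_notin.
Qed.

Lemma mem_imset_contract_None A : (None \in p @: A) = ~~ [disjoint A & c].
Proof.
rewrite -setI_eq0; apply/imsetP/set0Pn => [[u uA]|[u /setIP [uA uc]]].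
  by rewrite /p; case: ifP => // uc _; exists u; rewrite inE uA uc.
by exists u; rewrite ?contract_vertex_in.
Qed.

Lemma hinc_contract i : hinc Hc i = p @: hinc H i.
Proof.
apply/setP => -[v|]; rewrite ?mem_imset_contract_Some ?mem_imset_contract_None /=.
  case: ifP => [dic|_]; last first.
    by rewrite in_setU1 /= (mem_imset _ _ Some_inj) in_setD andbC.
  rewrite (mem_imset _ _ Some_inj); case vi: (v \in hinc H i) => //=.
  by rewrite (disjointFr dic vi).
case: ifP => [_|_]; last by rewrite setU11.
by apply/imsetP => -[].
Qed.

Lemma imset_contract_hverts : p @: hverts H \subset hverts Hc.
Proof.
apply/subsetP => _ /imsetP [v vV ->]; rewrite /= /p in_setU1.
by case: ifP => vc //=; rewrite (mem_imset _ _ Some_inj) inE vc.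
Qed.

Lemma preimset_contract_saturated U A : A \subset U ->
  (c :&: U \subset A) || [disjoint c & A] -> U :&: p @^-1: (p @: A) = A.
Proof.
move=> sAU unsplitA; apply/setP => u; rewrite !inE.
apply/andP/idP => [[uU /imsetP [a aA pua]] | uA]; last by rewrite (subsetP sAU) ?imset_f.
have [uc|uc] := boolP (u \in c); last first.
  by move: pua; rewrite contract_vertex_notin // => /esym/contract_vertex_Some <-.
case/orP: unsplitA => [scA | dcA]; first by apply: (subsetP scA); rewrite inE uc uU.
have ac : a \in c by move: pua; rewrite contract_vertex_in // /p; case: ifP.
by rewrite (disjointFr dcA ac) in aA.
Qed.

Hypothesis wfH : wf_hypergraph H.

Local Notation pre Us := (hverts H :&: p @^-1: Us).

Lemma delta_induced_contract Us B :
  delta (induced Hc Us) B = delta (induced H (pre Us)) (p @^-1: B).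
Proof.
apply/setP => i; rewrite !inE [hinc (induced Hc Us) i]hinc_contract hinc_contract /=.
case iE: (i \in hedges H) => //=.
rewrite subsetI wfH //= -sub_imset_pre.
case iUs: (p @: hinc H i \subset Us); rewrite ?andbF //= andbT.
move: iUs; rewrite sub_imset_pre => iUs.
rewrite !setI_eq0 !disjoint_imset_pre -!setI_eq0 preimsetD !setIDA setIA.
rewrite (setIidPl (wfH iE)) (setIidPl iUs).
case: (boolP (hinc H i \subset c)) => //= ic; apply/esym/negP.
case/andP=> /set0Pn [u /setIP [ui]] /[swap] /set0Pn [w /setDP [wi]].
by rewrite !inE !contract_vertex_in ?(subsetP ic) // => /negP.
Qed.

Lemma lambda_contract_le_delta Us A : A \in cuts (induced H (pre Us)) ->
  (c :&: pre Us \subset A) || [disjoint c & A] ->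
  lambda (induced Hc Us) <= #|delta (induced H (pre Us)) A|.
Proof.
rewrite in_cuts /= => /and3P [A0 sAU nUA] unsplitA.
have satA := preimset_contract_saturated sAU unsplitA.
rewrite -satA [X in delta _ X]setIC delta_induced_setIl -delta_induced_contract.
apply: lambda_le_delta; rewrite in_cuts imset_eq0 A0 /= sub_imset_pre.
rewrite (subset_trans sAU (subsetIr _ _)) /=.
case/subsetPn: nUA => u uU uA; apply/subsetPn; exists (p u).
  by move: uU; rewrite !inE => /andP [].
by apply: contra uA => puA; rewrite -satA inE uU inE.
Qed.

Lemma lambda_induced_le_contract U : U \subset hverts H -> 1 < #|p @: U| ->
  lambda (induced H U) <= lambda (induced Hc (p @: U)).
Proof.
move=> UV gt1; apply: lambda_ge => // B; rewrite in_cuts /= => /and3P [B0 sBU nUB].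
have cutB : p @^-1: B :&: U \in cuts (induced H U).
  rewrite in_cuts subsetIr /= subsetI subxx andbT; apply/andP; split.
    case/set0Pn: B0 => _ /[dup] /(subsetP sBU) /imsetP [u uU ->] puB.
    by apply/set0Pn; exists u; rewrite !inE puB.
  case/subsetPn: nUB => _ /imsetP [u uU ->] puB.
  by apply/subsetPn; exists u; rewrite ?inE.
apply: leq_trans (lambda_le_delta cutB) (subset_leq_card _).
rewrite delta_induced_setIl delta_induced_contract; apply: delta_induced_subset.
by rewrite subsetI UV -sub_imset_pre subxx.
Qed.

Lemma strength_le_contract e : e \in hedges H -> ~~ (hinc H e \subset c) ->
  strength H e <= strength Hc e.
Proof.
move=> eE ec; have [U /andP [eU UV] ->] := strength_attained (wfH eE).
have [->//|lambda_pos] := posnP (lambda (induced H U)).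
have pU_gt1 : 1 < #|p @: U|.
  case/subsetPn: ec => u ue uc.
  have /card_gt1P [x [y [xU yU xy]]] := lambda_gt0 lambda_pos.
  have [w wU wu] : exists2 w, w \in U & w != u.
    by case: (eqVneq x u) => [xu|]; [exists y; rewrite // -xu eq_sym | exists x].
  apply/card_gt1P; exists (p u), (p w); split; rewrite ?imset_f ?(subsetP eU u) //.
  rewrite contract_vertex_notin //.
  by apply: contra wu => /eqP/esym/contract_vertex_Some ->.
apply: leq_trans (lambda_induced_le_contract UV pU_gt1) (lambda_le_strength _ _).
  by rewrite hinc_contract; apply: imsetS.
exact: subset_trans (imsetS p UV) imset_contract_hverts.
Qed.

Lemma lambda_contract_le_pre Us : Us \subset hverts Hc -> None \notin Us ->
  lambda (induced Hc Us) <= lambda (induced H (pre Us)).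
Proof.
move=> UsV NUs; have [->//|m0] := posnP (lambda (induced Hc Us)).
have cU0 : c :&: pre Us = set0.
  apply/setP => v; rewrite !inE; case: (boolP (v \in c)) => //= vc.
  by rewrite contract_vertex_in // (negbTE NUs) andbF.
apply: lambda_ge => [|A cutA]; last first.
  by apply: lambda_contract_le_delta; rewrite ?cU0 ?sub0set.
apply: leq_trans (lambda_gt0 m0) (leq_trans (subset_leq_card _) (leq_imset_card p _)).
apply/subsetP => -[v|] vUs; last by rewrite vUs in NUs.
have := subsetP UsV _ vUs; rewrite /= in_setU1 /= (mem_imset _ _ Some_inj) inE.
case/andP=> vc vV; apply/imsetP; exists v; last by rewrite contract_vertex_notin.
by rewrite !inE vV contract_vertex_notin.
Qed.

Lemma lambda_contract_le_glued Us W k : None \in Us -> c != set0 ->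
  c \subset W -> W \subset hverts H -> k <= lambda (induced H W) ->
  minn (lambda (induced Hc Us)) k <= lambda (induced H (pre Us :|: W)).
Proof.
move=> NUs c0 cW WV kW.
have cU : c \subset pre Us.
  rewrite subsetI (subset_trans cW WV) -sub_imset_pre.
  by apply/subsetP => _ /imsetP [v vc ->]; rewrite contract_vertex_in.
apply: lambda_induced_setU => [|| A cutA unsplitW].
- by apply: contraNneq c0; rewrite -!subset0 => <-; rewrite subsetI cU cW.
- exact: leq_trans (geq_minr _ _) kW.
apply: leq_trans (geq_minl _ _) (lambda_contract_le_delta cutA _).
case/orP: unsplitW => [sWA | dWA]; last by rewrite (disjointWl cW dWA) orbT.
by rewrite (subset_trans (setSI _ cW) sWA).
Qed.

Lemma lambda_contract_eq0 Us : None \in Us -> c = set0 -> lambda (induced Hc Us) = 0.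
Proof.
move=> NUs c0; apply: (lambda_eq0_isolated (x := None)) => // i _.
by rewrite [hinc _ i]hinc_contract mem_imset_contract_None c0 -setI_eq0 setI0 eqxx.
Qed.

Lemma strength_contract_le e k : e \in hedges H -> e' \in hedges H ->
  strength H e < k -> k <= strength H e' -> strength Hc e <= strength H e.
Proof.
move=> eE e'E ek ke'; apply: strength_le => Us eUs UsV.
have eU : hinc H e \subset pre Us by rewrite subsetI wfH // -sub_imset_pre -hinc_contract.
have UV : pre Us \subset hverts H := subsetIl _ _.
have [NUs|NUs] := boolP (None \in Us); last first.
  exact: leq_trans (lambda_contract_le_pre UsV NUs) (lambda_le_strength eU UV).
have [c0|c0] := eqVneq c set0; first by rewrite lambda_contract_eq0.
have [W /andP [e'W WV] strW] := strength_attained (wfH e'E).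
rewrite strW in ke'.
have UWV : pre Us :|: W \subset hverts H by rewrite subUset UV WV.
have := lambda_contract_le_glued NUs c0 e'W WV ke'.
move/leq_trans/(_ (lambda_le_strength (subset_trans eU (subsetUl _ W)) UWV)).
by rewrite geq_min => /orP [//|/leq_ltn_trans/(_ ek)]; rewrite ltnn.
Qed.

End Contraction.

Theorem lemma2p3 (V I : finType) (H : hypergraph V I) (e e' : I) (k : nat) :
  wf_hypergraph H -> e \in hedges H -> e' \in hedges H -> e != e' -> 0 < k ->
  (k <= strength H e -> strength H e' < k ->
     strength H e = strength (delete H e') e) /\
  (strength H e < k -> k <= strength H e' ->
     strength H e = strength (contract H e') e).
Proof.
(* [e != e'] and [0 < k] follow from the strength hypotheses of each part. *)
move=> wfH eE e'E _ _; split => [ke e'k | ek ke'].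
  by rewrite (strength_delete_weak wfH eE ke e'k).
have ec : ~~ (hinc H e \subset hinc H e').
  by apply: contraTN ke' => /strength_subset le; rewrite -ltnNge (leq_ltn_trans le ek).
apply/eqP; rewrite eqn_leq strength_le_contract //=.
exact: strength_contract_le ek ke'.
Qed.
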